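(* Let $n,m$ be positive integers, $S\subseteq S_n$ a subset containing the identity, and $G\le S_n$ the subgroup generated by $S$. If the player can win the $(S,m)$-game, then $|G|=1$, or $m=1$, or $(|G|,m)=(p^a,p^b)$ for some prime $p$ and positive integers $a,b$. Equivalently, if there are distinct primes $p,q$ with $p\mid |G|$ and $q\mid m$, the player cannot win.
   Context: The $(S,m)$-game: $n$ counters at positions $1,\dots,n$, each showing an element of $\mathbb{Z}_m$, so a configuration is a vector in $\mathbb{Z}_m^n$, initially arbitrary and unknown. Each turn the player chooses a move $y\in\mathbb{Z}_m^n$, added coordinatewise; then an adversarially chosen permutation $\sigma\in S$ (possibly different each turn) is applied, replacing $x$ by $x'$ with $x'_{\sigma(i)}=x_i$. The player wins if at some moment (including initially) all counters show $0$. A strategy is a finite sequence of moves; it is winning if it forces the zero configuration at some time for every initial configuration and every choice of permutations. ''The player can win'' means a winning finite sequence exists. *)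

From mathcomp Require Import all_boot all_fingroup.
Set Implicit Arguments. Unset Strict Implicit. Unset Printing Implicit Defensive.

(* The (S,m)-game.  Elements of Z_m are represented by natural numbers,
   read modulo m; a configuration is a function 'I_n -> nat (read mod m). *)

Definition config (n : nat) := 'I_n -> nat.

(* One turn: add the move y coordinatewise, then apply sigma:
   x'_(sigma i) = x_i + y_i, i.e. x' j = (x + y) (sigma^-1 j). *)
Definition step (n : nat) (x y : config n) (s : 'S_n) : config n :=
  fun j => x ((s^-1)%g j) + y ((s^-1)%g j).

Fixpoint config_at (n : nat) (x : config n) (ys : seq (config n))
    (ss : nat -> 'S_n) (t : nat) : config n :=
  match t with
  | 0 => x
  | t'.+1 => step (config_at x ys ss t') (nth (fun _ => 0) ys t') (ss t')
  end.

Definition is_zero_mod (n m : nat) (x : config n) : Prop :=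
  forall i, x i %% m = 0.

Definition winning (n m : nat) (S : {set 'S_n}) (ys : seq (config n)) : Prop :=
  forall (x : config n) (ss : nat -> 'S_n),
    (forall t, ss t \in S) ->
    exists2 t, t <= size ys & is_zero_mod m (config_at x ys ss t).

Definition can_win (n m : nat) (S : {set 'S_n}) : Prop :=
  exists ys : seq (config n), winning m S ys.

From mathcomp Require Import all_boot all_fingroup all_algebra all_solvable.
From Stdlib Require Import Classical.
Set Implicit Arguments. Unset Strict Implicit. Unset Printing Implicit Defensive.
Import GRing.Theory.

(* Reduce modulo a prime q dividing m, so that configurations become row
   vectors over F_q on which S acts by permutation matrices, and say that v
   has depth at most j when every product of j operators s - 1 (s in S) kills
   v.  Vectors of finite depth form a <<S>>-stable subgroup.  If a prime p <> q
   divides |<<S>>|, take g of order p: g - 1 kills any vector of finite depth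
   after finitely many steps, but never kills a coordinate vector moved by g,
   since a g-fixed vector z = (g - 1) w satisfies p z = (1 + g + ... + g^(p-1)) z
   = g^p w - w = 0.  For v of infinite depth some s in S makes both s v and
   v - s v of infinite depth; so the adversary can maintain two positions of
   infinite depth whose difference has infinite depth: after the player adds y
   to both, at most one of them drops to finite depth, and the other is split
   again.  Hence some initial configuration never reaches zero. *)

Lemma gen_mull_ind (gT : finGroupType) (A : {set gT}) (P : gT -> Prop) :
  P 1%g -> (forall a x, a \in A -> P x -> P (a * x)%g) ->
  forall x, x \in <<A>>%g -> P x.
Proof.
move=> P1 PM x /gen_prodgP [k [c cA ->]].
elim: k c cA => [|k IHk] c cA; first by rewrite big_ord0.
by rewrite big_ord_recl; apply: PM => //; apply: IHk.
Qed.

Lemma mul_perm_mxE (R : pzRingType) m n (A : 'M[R]_(m, n)) s i j :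
  (A *m perm_mx s)%R i j = A i ((s^-1)%g j).
Proof. by have := col_permE s^-1 A; rewrite invgK => <-; rewrite mxE. Qed.

Section Depth.

Local Open Scope ring_scope.

Variables (R : pzRingType) (n : nat) (S : {set 'S_n}).
Implicit Types (u v w : 'rV[R]_n).

Fixpoint depth_le (j : nat) v : Prop :=
  if j is j'.+1 then forall s, s \in S -> depth_le j' (v *m perm_mx s - v)
  else v = 0.

Definition finite_depth v := exists j, depth_le j v.

Lemma depth_le0 j : depth_le j 0.
Proof. by elim: j => [|j IHj] //= s _; rewrite mul0mx subr0. Qed.

Lemma depth_leB j u v : depth_le j u -> depth_le j v -> depth_le j (u - v).
Proof.
elim: j u v => [|j IHj] u v /=; first by move=> -> ->; rewrite subr0.
move=> du dv s sS.
have -> : (u - v) *m perm_mx s - (u - v) = (u *m perm_mx s - u) - (v *m perm_mx s - v).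
  by rewrite mulmxBl !opprB addrACA [RHS]addrACA (addrC (- u)).
exact: IHj (du s sS) (dv s sS).
Qed.

Lemma depth_leD j u v : depth_le j u -> depth_le j v -> depth_le j (u + v).
Proof.
move=> du dv; have -> : u + v = u - (0 - v) by rewrite sub0r opprK.
by apply: depth_leB => //; apply: depth_leB => //; apply: depth_le0.
Qed.

Lemma depth_leS j v : depth_le j v -> depth_le j.+1 v.
Proof.
elim: j v => [|j IHj] v /=; first by move=> -> s _; rewrite mul0mx subr0.
by move=> dv s sS; apply: IHj; apply: dv.
Qed.

Lemma depth_le_leq j k v : (j <= k)%N -> depth_le j v -> depth_le k v.
Proof.
move=> /subnKC <-; elim: (k - j)%N => [|d IHd] dv; first by rewrite addn0.
by rewrite addnS; apply: depth_leS; apply: IHd.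
Qed.

Lemma depth_le_act j v s : s \in S -> depth_le j v -> depth_le j (v *m perm_mx s).
Proof.
elim: j v s => [|j IHj] v s sS /=; first by move=> ->; rewrite mul0mx.
move=> dv t tS.
have -> : v *m perm_mx s *m perm_mx t - v *m perm_mx s =
    (v *m perm_mx s - v) *m perm_mx t + (v *m perm_mx t - v) - (v *m perm_mx s - v).
  by rewrite mulmxBl addrA subrK opprB addrA subrK.
apply: depth_leB; last exact: dv.
by apply: depth_leD; [apply: IHj; last apply: dv | apply: dv].
Qed.

Lemma depth_le_sub_actG j v g :
  g \in <<S>>%g -> depth_le j.+1 v -> depth_le j (v *m perm_mx g - v).
Proof.
move=> gG; elim/gen_mull_ind: g / gG v => [|s g sS IHg] v dv.
  by rewrite perm_mx1 mulmx1 subrr; apply: depth_le0.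
have -> : v *m perm_mx (s * g) - v =
    (v *m perm_mx s *m perm_mx g - v *m perm_mx s) + (v *m perm_mx s - v).
  by rewrite perm_mxM mulmxA addrA subrK.
by apply: depth_leD; [apply: IHg; apply: depth_le_act | apply: dv].
Qed.

Lemma iter_sub_act_eq0 j v g : g \in <<S>>%g -> depth_le j v ->
  iter j (fun w => w *m perm_mx g - w) v = 0.
Proof.
move=> gG; elim: j v => [//|j IHj] v dv.
by rewrite iterSr; apply: IHj; apply: depth_le_sub_actG.
Qed.

Lemma finite_depthB u v : finite_depth u -> finite_depth v -> finite_depth (u - v).
Proof.
move=> [j du] [k dv]; exists (maxn j k).
by apply: depth_leB; [apply: depth_le_leq du | apply: depth_le_leq dv];
  rewrite ?leq_maxl ?leq_maxr.
Qed.

Lemma finite_depth_actG v g :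
  g \in <<S>>%g -> finite_depth v -> finite_depth (v *m perm_mx g).
Proof.
move=> gG [j dv]; exists j.+1; rewrite -[_ *m _](subrK v).
apply: depth_leD; last exact: depth_leS.
by apply/depth_leS/depth_le_sub_actG => //; apply: depth_leS.
Qed.

Lemma common_depth (vs : seq 'rV[R]_n) :
  {in vs, forall v, finite_depth v} -> exists j, {in vs, forall v, depth_le j v}.
Proof.
elim: vs => [|v vs IHvs] fd; first by exists 0%N.
have [j dv] := fd v (mem_head v vs).
have [k dvs] : exists k, {in vs, forall w, depth_le k w}.
  by apply: IHvs => w wvs; apply: fd; rewrite inE wvs orbT.
exists (maxn j k) => w; rewrite inE => /predU1P [-> | wvs].
  by apply: depth_le_leq dv; rewrite leq_maxl.
by apply: depth_le_leq (dvs w wvs); rewrite leq_maxr.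
Qed.

Lemma finite_depth_sub_act v :
  (forall s, s \in S -> finite_depth (v *m perm_mx s - v)) -> finite_depth v.
Proof.
move=> fd.
have [j dS] :
    exists j, {in [seq v *m perm_mx s - v | s <- enum S], forall w, depth_le j w}.
  by apply: common_depth => _ /mapP [s sS ->]; apply: fd; rewrite -mem_enum.
by exists j.+1 => s sS; apply: dS; apply: map_f; rewrite mem_enum.
Qed.

Definition apart u v :=
  [/\ ~ finite_depth u, ~ finite_depth v & ~ finite_depth (u - v)].

Lemma apart_act v : ~ finite_depth v -> exists2 s, s \in S & apart v (v *m perm_mx s).
Proof.
move=> nfd; have [s sS nfds] : exists2 s, s \in S & ~ finite_depth (v *m perm_mx s - v).
  apply: NNPP => nex; apply: nfd; apply: finite_depth_sub_act => s sS.
  by apply: NNPP => nfds; apply: nex; exists s.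
exists s => //; split => // [fdv | fdv].
  apply: nfd; rewrite -[v]mulmx1 -perm_mx1 -(mulgV s) perm_mxM mulmxA.
  by apply: finite_depth_actG fdv; rewrite groupV mem_gen.
by apply: nfds; rewrite -opprB -sub0r; apply: finite_depthB fdv; exists 0%N.
Qed.

Hypothesis one_in_S : 1%g \in S.

Lemma apart_step u v y : apart u v ->
  exists c c' s s', [/\ c \in [:: u; v], c' \in [:: u; v], s \in S, s' \in S &
    apart ((c + y) *m perm_mx s) ((c' + y) *m perm_mx s')].
Proof.
move=> [nfu nfv nfuv].
have uv_y : (u + y) - (v + y) = u - v by rewrite opprD addrACA subrr addr0.
have [fduy | nfduy] := classic (finite_depth (u + y)).
  have nfdvy : ~ finite_depth (v + y).
    by move=> fdvy; apply: nfuv; rewrite -uv_y; apply: finite_depthB.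
  have [s sS apv] := apart_act nfdvy.
  by exists v, v, 1%g, s; rewrite perm_mx1 mulmx1 !inE !eqxx orbT.
have [fdvy | nfdvy] := classic (finite_depth (v + y)).
  have [s sS apu] := apart_act nfduy.
  by exists u, u, 1%g, s; rewrite perm_mx1 mulmx1 !inE !eqxx.
exists u, v, 1%g, 1%g; rewrite perm_mx1 !mulmx1 !inE !eqxx orbT.
by split => //; split => //; rewrite uv_y.
Qed.

Fixpoint trajectory v (Y : nat -> 'rV[R]_n) (ss : nat -> 'S_n) (t : nat) : 'rV[R]_n :=
  if t is t'.+1 then (trajectory v Y ss t' + Y t') *m perm_mx (ss t') else v.

Lemma trajectory_shift v Y ss t : trajectory v Y ss t.+1 =
  trajectory ((v + Y 0%N) *m perm_mx (ss 0%N)) (fun k => Y k.+1) (fun k => ss k.+1) t.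
Proof. by elim: t => [|t /= ->]. Qed.

Definition escapes (T : nat) (Y : nat -> 'rV[R]_n) v :=
  exists2 ss, (forall t, ss t \in S) &
    forall t, (t <= T)%N -> ~ finite_depth (trajectory v Y ss t).

Lemma escapes_cons T Y v s : ~ finite_depth v -> s \in S ->
  escapes T (fun k => Y k.+1) ((v + Y 0%N) *m perm_mx s) -> escapes T.+1 Y v.
Proof.
move=> nfv sS [ss ssS esc]; exists (fun t => if t is t'.+1 then ss t' else s).
  by case.
by case=> // t tT; rewrite trajectory_shift; apply: esc.
Qed.

Lemma apart_escapes T Y u v : apart u v -> escapes T Y u \/ escapes T Y v.
Proof.
elim: T Y u v => [|T IHT] Y u v apuv; have [nfu nfv _] := apuv.
  by left; exists (fun _ => 1%g) => // [[|]].
have [c [c' [s [s' [cuv c'uv sS s'S apc]]]]] := apart_step (Y 0%N) apuv.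
have next w r : w \in [:: u; v] -> r \in S ->
    escapes T (fun k => Y k.+1) ((w + Y 0%N) *m perm_mx r) ->
    escapes T.+1 Y u \/ escapes T.+1 Y v.
  by rewrite !inE => /orP [/eqP -> | /eqP ->] rS /(escapes_cons _ rS); auto.
by case: (IHT (fun k => Y k.+1) _ _ apc) => esc;
  [apply: (next c s) | apply: (next c' s')].
Qed.

Lemma exists_escape T Y : (exists v, ~ finite_depth v) -> exists v, escapes T Y v.
Proof.
move=> [v nfv]; have [s _ apv] := apart_act nfv.
by have [esc | esc] := apart_escapes T Y apv; eexists; exact: esc.
Qed.

End Depth.

Section InfiniteDepth.

Local Open Scope ring_scope.

Variables (F : fieldType) (n : nat).

Lemma sub_act_fixed_eq0 (g : 'S_n) (w : 'rV[F]_n) : (#[g]%g%:R : F) != 0 ->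
  (w *m perm_mx g - w) *m perm_mx g = w *m perm_mx g - w -> w *m perm_mx g - w = 0.
Proof.
set z := w *m perm_mx g - w => og_neq0 zfix.
have zfixX k : z *m perm_mx (g ^+ k) = z.
  elim: k => [|k IHk]; first by rewrite expg0 perm_mx1 mulmx1.
  by rewrite expgSr perm_mxM mulmxA IHk zfix.
have : \sum_(0 <= k < #[g]%g) z *m perm_mx (g ^+ k) = 0.
  rewrite (telescope_sumr_eq (fun k => w *m perm_mx (g ^+ k))) //.
    by rewrite expg_order perm_mx1 mulmx1 subrr.
  by move=> k _; rewrite mulmxBl -mulmxA -perm_mxM expgS.
rewrite big_mkord.
under eq_bigr do rewrite zfixX.
rewrite sumr_const card_ord -scaler_nat => /eqP.
by rewrite scaler_eq0 (negbTE og_neq0) => /eqP.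
Qed.

Lemma exists_infinite_depth (S : {set 'S_n}) g : g \in <<S>>%g -> g != 1%g ->
  (#[g]%g%:R : F) != 0 -> exists v : 'rV[F]_n, ~ finite_depth S v.
Proof.
move=> gG g_neq1 og_neq0; set T := fun w : 'rV[F]_n => w *m perm_mx g - w.
have [i gi] : exists i, g i != i.
  apply/existsP; apply: contraNT g_neq1 => /existsPn gid.
  by apply/eqP/permP => i; rewrite perm1; apply/eqP; have := gid i; rewrite negbK.
pose v : 'rV[F]_n := delta_mx 0 i.
have Tv_neq0 : T v != 0.
  apply/eqP => /rowP /(_ (g i)); rewrite mxE mul_perm_mxE !mxE permK (negbTE gi) eqxx.
  by rewrite subr0 eqxx => /eqP; rewrite oner_eq0.
have iterT_neq0 j : iter j.+1 T v != 0.
  elim: j => // j IHj; apply: contra IHj => /eqP TTv.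
  rewrite iterS; apply/eqP/sub_act_fixed_eq0 => //.
  by apply/subr0_eq; move: TTv; rewrite !iterS.
exists v => [[j dv]]; have := iterT_neq0 j.
by rewrite (iter_sub_act_eq0 gG (depth_leS dv)) eqxx.
Qed.

End InfiniteDepth.

Section Configurations.

Local Open Scope ring_scope.

Variables (R : pzRingType) (n : nat).

Definition row_of_config (x : config n) : 'rV[R]_n := \row_j (x j)%:R.

Lemma row_of_config_at x ys ss t :
  row_of_config (config_at x ys ss t) =
  trajectory (row_of_config x) (fun k => row_of_config (nth (fun _ => 0%N) ys k)) ss t.
Proof.
elim: t => [//|t /= <-]; apply/rowP => j.
by rewrite /step mxE mul_perm_mxE !mxE natrD.
Qed.

Lemma row_of_config_eq0 m x : (m%:R : R) = 0 -> is_zero_mod m x -> row_of_config x = 0.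
Proof.
move=> m0 x0; apply/rowP => j; rewrite !mxE (divn_eq (x j) m) x0 addn0.
by rewrite natrM m0 mulr0.
Qed.

End Configurations.

Arguments row_of_config {R n}.

Lemma row_of_config_Fp q n (v : 'rV['F_q]_n) :
  row_of_config (fun j => v ord0 j : nat) = v.
Proof. by apply/rowP => j; rewrite mxE natr_Zp. Qed.

Lemma cannot_win n m (S : {set 'S_n}) p q : 1%g \in S -> prime p -> prime q -> p != q ->
  p %| #|<<S>>%g| -> q %| m -> ~ can_win m S.
Proof.
move=> S1 pP qP pq pG qm [ys win].
have [g gG og] := Cauchy pP pG.
have nfv : exists v : 'rV['F_q]_n, ~ finite_depth S v.
  apply: exists_infinite_depth gG _ _.
    by rewrite -order_eq1 og; apply: contraTneq pP => ->.
  by rewrite og -(dvdn_pcharf (pchar_Fp qP)) dvdn_prime2 // eq_sym.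
pose Y k : 'rV['F_q]_n := row_of_config (nth (fun _ => 0) ys k).
have [x [ss ssS esc]] := exists_escape S1 (size ys) Y nfv.
have [t tle zero] := win (fun j => x ord0 j : nat) ss ssS.
apply: (esc t tle); exists 0 => /=.
rewrite -(row_of_config_Fp x) -row_of_config_at; apply: row_of_config_eq0 zero.
by apply/eqP; rewrite -(dvdn_pcharf (pchar_Fp qP)).
Qed.

Lemma prime_power_pair (g m : nat) : 0 < g -> 0 < m ->
  (forall p q, prime p -> prime q -> p %| g -> q %| m -> p = q) ->
  g = 1 \/ m = 1 \/
  exists p a b : nat, [/\ prime p, 0 < a, 0 < b, g = p ^ a & m = p ^ b].
Proof.
move=> g_gt0 m_gt0 same.
have [-> | g_neq1] := eqVneq g 1; first by left.
have [-> | m_neq1] := eqVneq m 1; first by right; left.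
have [p pP pg] : exists2 p, prime p & p %| g.
  by exists (pdiv g); rewrite ?pdiv_dvd // pdiv_prime // ltn_neqAle eq_sym g_neq1.
have [r rP rm] : exists2 r, prime r & r %| m.
  by exists (pdiv m); rewrite ?pdiv_dvd // pdiv_prime // ltn_neqAle eq_sym m_neq1.
have power_of k : 0 < k -> k != 1 -> (forall d, prime d -> d %| k -> d = p) ->
    exists2 a, 0 < a & k = p ^ a.
  move=> k_gt0 k_neq1 only_p.
  have /p_natP [a ka] : p.-nat k.
    by apply/pnatP => // d dP dk; rewrite (only_p d dP dk) inE.
  by exists a => //; rewrite lt0n; apply: contra k_neq1 => /eqP a0; rewrite ka a0.
have [a a_gt0 ->] : exists2 a, 0 < a & g = p ^ a.
  apply: power_of => // d dP dg.
  by rewrite (same d r dP rP dg rm) (same p r pP rP pg rm).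
have [b b_gt0 ->] : exists2 b, 0 < b & m = p ^ b.
  by apply: power_of => // d dP dm; rewrite (same p d pP dP pg dm).
by right; right; exists p, a, b.
Qed.

Theorem lemma6p2 (n m : nat) (S : {set 'S_n}) :
  0 < n -> 0 < m -> (1%g \in S) -> can_win m S ->
  #|<<S>>%g| = 1 \/ m = 1 \/
  exists p a b : nat, [/\ prime p, 0 < a, 0 < b, #|<<S>>%g| = p ^ a & m = p ^ b].
Proof.
move=> _ m_gt0 S1 win; apply: prime_power_pair (cardG_gt0 _) m_gt0 _ => p q pP qP pG qm.
by have [// | pq] := eqVneq p q; case: (cannot_win S1 pP qP pq pG qm win).
Qed.
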